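(* Let $l_0<r_0$ and let $\rho_0:[l_0,r_0]\to[-1,1]$ be differentiable with bounded derivative, $\rho_0(l_0)=1$, $\rho_0(r_0)=-1$, and set $\bar l=(4\|\rho_0'\|_\infty)^{-1}$. Let $\tilde l$ (nondecreasing) and $\tilde r$ (nonincreasing) be continuous with $\tilde l(0)=l_0$, $\tilde r(0)=r_0$, $\tilde l<\tilde r$, and let $\rho$ solve $\partial_t\rho=\rho_{xx}$ on $\{(x,t):\tilde l(t)<x<\tilde r(t)\}$ with $\rho(\tilde l(t),t)=1$, $\rho(\tilde r(t),t)=-1$, $\rho(\cdot,0)=\rho_0$. If $\tau>0$ is such that $\tilde l(t)\le l_0+2\bar l$ and $\tilde r(t)\ge r_0-2\bar l$ for all $t<\tau$, then $$\rho(x,t)\ge0\ \ \forall t\le\tau,\ \forall x\in[\tilde l(t),l_0+2\bar l],\qquad \rho(x,t)\le0\ \ \forall t\le\tau,\ \forall x\in[r_0-2\bar l,\tilde r(t)].$$ *)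

From Stdlib Require Export Reals.
Open Scope R_scope.

Definition in_closed_dom (lt rt : R -> R) (T x t : R) : Prop :=
  0 <= t <= T /\ lt t <= x <= rt t.

Definition in_open_dom (lt rt : R -> R) (T x t : R) : Prop :=
  0 < t < T /\ lt t < x < rt t.

Definition cont_on_dom (rho : R -> R -> R) (lt rt : R -> R) (T : R) : Prop :=
  forall x t, in_closed_dom lt rt T x t ->
  forall eps, 0 < eps -> exists delta, 0 < delta /\
    forall y s, in_closed_dom lt rt T y s ->
      Rabs (y - x) < delta -> Rabs (s - t) < delta ->
      Rabs (rho y s - rho x t) < eps.

Definition heat_eq_interior (rho : R -> R -> R) (lt rt : R -> R) (T : R) : Prop :=
  exists rho_t rho_x rho_xx : R -> R -> R,
    forall x t, in_open_dom lt rt T x t ->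
      derivable_pt_lim (fun s => rho x s) t (rho_t x t) /\
      (forall y, lt t < y < rt t -> derivable_pt_lim (fun z => rho z t) y (rho_x y t)) /\
      derivable_pt_lim (fun z => rho_x z t) x (rho_xx x t) /\
      rho_t x t = rho_xx x t.

Definition cont_on_0T (f : R -> R) (T : R) : Prop :=
  forall t, 0 <= t <= T -> limit1_in f (fun s => 0 <= s <= T) (f t) t.

(* Write N for the supremum of |rho0'| and lb = 1/(4N).  The proof compares
   rho with barriers that are affine in x:
   - by the mean value theorem rho0 lies between the lines 1 - N (x - l0) and
     -1 + N (r0 - x), and r0 - l0 >= 2/N = 8 lb;
   - weak maximum principle on the shrinking domain lt t <= x <= rt t: a
     function with v_t = v_xx + eps (eps > 0) that is positive on the
     parabolic boundary stays positive (first-touching-time argument); by an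
     eps-perturbation, any affine transform a rho + b + c x that is
     nonnegative on the parabolic boundary stays nonnegative;
   - w = rho - 1 + 2N (x - l0) is nonnegative at t = 0 and on both moving
     boundaries, because the boundaries stay within 2 lb of their initial
     positions; hence rho >= 1 - 2N (x - l0) >= 0 for x <= l0 + 2 lb.  The
     right-hand claim uses the mirror barrier -rho - 1 + 2N (r0 - x). *)

From Stdlib Require Import Reals Lra Classical.
From Coquelicot Require Import Coquelicot.
Open Scope R_scope.

(* Projection of the real line onto [l, r]: it extends a function given on
   [l, r] to the whole line, as the global mean value theorem requires. *)
Definition clamp (l r x : R) : R := Rmax l (Rmin r x).

Lemma clamp_in l r x : l <= r -> l <= clamp l r x <= r.
Proof. intros; unfold clamp, Rmax, Rmin; repeat destruct Rle_dec; lra. Qed.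

Lemma clamp_id l r x : l <= x <= r -> clamp l r x = x.
Proof. intros; unfold clamp, Rmax, Rmin; repeat destruct Rle_dec; lra. Qed.

Lemma clamp_dist l r x c : l <= c <= r -> Rabs (clamp l r x - c) <= Rabs (x - c).
Proof.
  intros; unfold clamp, Rmax, Rmin; repeat destruct Rle_dec;
  unfold Rabs; repeat destruct Rcase_abs; lra.
Qed.

Lemma D_in_MVT (f f' : R -> R) (l r a b : R) :
  (forall x, l <= x <= r -> D_in f f' (fun y => l <= y <= r) x) ->
  l <= a -> a <= b -> b <= r ->
  exists c, l <= c <= r /\ f b - f a = f' c * (b - a).
Proof.
  intros Hd Ha Hab Hb.
  destruct (Req_dec a b) as [<-|Hne]; [exists a; split; [lra|ring]|].
  set (h := fun x => f (clamp l r x)).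
  assert (Hcont : forall c, l <= c <= r -> continuity_pt h c).
  { intros c Hc eps Heps.
    destruct (cont_deriv _ _ _ _ (Hd c Hc) eps Heps) as [alp [Halp Hclose]].
    exists alp; split; [exact Halp|]. intros y [_ Hy]. simpl in *. unfold R_dist in *.
    unfold h; rewrite (clamp_id l r c) by lra.
    destruct (Req_dec c (clamp l r y)) as [<-|Hyc].
    - unfold Rminus; rewrite Rplus_opp_r, Rabs_R0; lra.
    - apply Hclose; split; [split; [apply clamp_in; lra|exact Hyc]|].
      simpl; unfold R_dist. eapply Rle_lt_trans; [apply clamp_dist; lra|exact Hy]. }
  assert (Hder : forall x, l < x < r -> derivable_pt_lim h x (f' x)).
  { intros x Hx eps Heps.
    destruct (Hd x ltac:(lra) eps Heps) as [alp [Halp Hquot]].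
    assert (Hpos : 0 < Rmin alp (Rmin (x - l) (r - x))) by (repeat apply Rmin_glb_lt; lra).
    exists (mkposreal _ Hpos). intros k Hk0 Hk. simpl in Hk.
    assert (Hm1 := Rmin_l alp (Rmin (x - l) (r - x))).
    assert (Hm2 := Rmin_r alp (Rmin (x - l) (r - x))).
    assert (Hm3 := Rmin_l (x - l) (r - x)). assert (Hm4 := Rmin_r (x - l) (r - x)).
    assert (Hk' : - Rabs k <= k <= Rabs k) by (unfold Rabs; destruct Rcase_abs; lra).
    unfold h; rewrite !clamp_id by lra.
    assert (Hq := Hquot (x + k)). simpl in Hq. unfold R_dist in Hq.
    replace (x + k - x) with k in Hq by ring.
    apply Hq; split; [split; [lra|intro; apply Hk0; lra]|lra]. }
  destruct (MVT_gen h a b f') as [c [Hc Hinc]].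
  - intros x Hx. rewrite Rmin_left, Rmax_right in Hx by lra.
    apply is_derive_Reals, Hder; lra.
  - intros x Hx. rewrite Rmin_left, Rmax_right in Hx by lra. apply Hcont; lra.
  - rewrite Rmin_left, Rmax_right in Hc by lra.
    exists c; split; [lra|]. unfold h in Hinc. rewrite !clamp_id in Hinc by lra. exact Hinc.
Qed.

Lemma profile_envelope (f f' : R -> R) (l r N : R) :
  (forall x, l <= x <= r -> D_in f f' (fun y => l <= y <= r) x) ->
  (forall x, l <= x <= r -> Rabs (f' x) <= N) ->
  l <= r -> f l = 1 -> f r = -1 ->
  (forall x, l <= x <= r -> 1 - N * (x - l) <= f x <= -1 + N * (r - x)) /\
  2 <= N * (r - l).
Proof.
  intros Hd HN Hlr Hl Hr.
  assert (Hslope : forall c, l <= c <= r -> - N <= f' c <= N).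
  { intros c Hc. specialize (HN c Hc). unfold Rabs in HN; destruct Rcase_abs; lra. }
  split.
  - intros x Hx. split.
    + destruct (D_in_MVT f f' l r l x Hd) as [c [Hc E]]; try lra.
      specialize (Hslope c Hc). nra.
    + destruct (D_in_MVT f f' l r x r Hd) as [c [Hc E]]; try lra.
      specialize (Hslope c Hc). nra.
  - destruct (D_in_MVT f f' l r l r Hd) as [c [Hc E]]; try lra.
    specialize (Hslope c Hc). nra.
Qed.

Lemma cont_on_0T_bound_endpoint (f : R -> R) (tau K : R) :
  0 < tau -> cont_on_0T f tau ->
  (forall t, 0 <= t < tau -> f t <= K) -> f tau <= K.
Proof.
  intros Htau Hc Hbound. apply Rnot_lt_le. intro HK.
  destruct (Hc tau ltac:(lra) (f tau - K) ltac:(lra)) as [al [Hal Hnear]].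
  set (t := Rmax (tau - al/2) (tau/2)).
  assert (H1 := Rmax_l (tau - al/2) (tau/2)). assert (H2 := Rmax_r (tau - al/2) (tau/2)).
  assert (H3 : t < tau) by (unfold t; apply Rmax_lub_lt; lra).
  fold t in H1, H2.
  assert (Hft := Hbound t ltac:(lra)).
  assert (Hdist : Rabs (f t - f tau) < f tau - K).
  { apply (Hnear t). split; [lra|]. simpl; unfold R_dist. rewrite Rabs_left by lra. lra. }
  revert Hdist. unfold Rabs; destruct Rcase_abs; lra.
Qed.

Lemma cont_on_0T_opp (f : R -> R) (tau : R) :
  cont_on_0T f tau -> cont_on_0T (fun t => - f t) tau.
Proof. intros Hc t Ht. apply limit_Ropp, Hc, Ht. Qed.

Lemma deriv_nonpos_at_left_min (g : R -> R) (t l r : R) :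
  0 < r -> derivable_pt_lim g t l ->
  (forall s, t - r < s < t -> g t <= g s) -> l <= 0.
Proof.
  intros Hr Hd Hmin. apply Rnot_lt_le. intro Hl.
  destruct (Hd l Hl) as [[dl Hdl] Hquot]. simpl in Hquot.
  set (h := - Rmin (dl/2) (r/2)).
  assert (Hm1 := Rmin_l (dl/2) (r/2)). assert (Hm2 := Rmin_r (dl/2) (r/2)).
  assert (Hpos : 0 < Rmin (dl/2) (r/2)) by (apply Rmin_glb_lt; lra).
  assert (Hh : h < 0) by (unfold h; lra).
  specialize (Hquot h ltac:(lra) ltac:(rewrite Rabs_left by lra; unfold h; lra)).
  assert (Hs : g t <= g (t + h)) by (apply Hmin; unfold h; lra).
  assert (Hi : / h < 0) by (apply Rinv_lt_0_compat; lra).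
  assert (Hq : (g (t + h) - g t) / h <= 0) by (unfold Rdiv; nra).
  revert Hquot. unfold Rabs; destruct Rcase_abs; lra.
Qed.

(* At an interior minimum of g on (al, be) the second derivative of g is
   nonnegative: otherwise g' < 0 just right of the critical point, and g
   would decrease there. *)
Lemma second_deriv_nonneg_at_min (g g' : R -> R) (al be x0 l : R) :
  al < x0 < be ->
  (forall y, al < y < be -> derivable_pt_lim g y (g' y)) ->
  derivable_pt_lim g' x0 l ->
  (forall y, al < y < be -> g x0 <= g y) -> 0 <= l.
Proof.
  intros Hx Hg Hg' Hmin.
  assert (Hcrit : g' x0 = 0).
  { exact (deriv_minimum g al be x0 (exist _ (g' x0) (Hg x0 Hx)) ltac:(lra) ltac:(lra)
             ltac:(intros; apply Hmin; lra)). }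
  apply Rnot_lt_le. intro Hl.
  destruct (Hg' (-l) ltac:(lra)) as [[dl Hdl] Hquot]. simpl in Hquot.
  set (h := Rmin dl (be - x0) / 2).
  assert (Hm1 := Rmin_l dl (be - x0)). assert (Hm2 := Rmin_r dl (be - x0)).
  assert (Hpos : 0 < Rmin dl (be - x0)) by (apply Rmin_glb_lt; lra).
  assert (Hdecr : forall k, 0 < k <= h -> g' (x0 + k) < 0).
  { intros k Hk.
    specialize (Hquot k ltac:(lra) ltac:(rewrite Rabs_right by lra; unfold h in Hk; lra)).
    rewrite Hcrit in Hquot.
    assert (Hi : 0 < / k) by (apply Rinv_0_lt_compat; lra).
    assert (Hq : (g' (x0 + k) - 0) / k < 0)
      by (revert Hquot; unfold Rabs; destruct Rcase_abs; lra).
    unfold Rdiv in Hq. nra. }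
  destruct (MVT_cor2 g g' x0 (x0 + h)) as [c [Hinc Hc]].
  - unfold h; lra.
  - intros c Hc. apply Hg. unfold h in Hc; lra.
  - assert (g' c < 0) by (replace c with (x0 + (c - x0)) by ring; apply Hdecr; lra).
    assert (g x0 <= g (x0 + h)) by (apply Hmin; unfold h; lra).
    unfold h in *. nra.
Qed.

(* Compactness of [a, b]: if Q holds near every (x, t0) with x in [a, b],
   then it holds on all of [a, b] x [t0, t0 + d) for a single d > 0.  The
   proof pushes the right end of such a strip up to b (least upper bound). *)
Lemma uniform_time_step (Q Dom : R -> R -> Prop) (a b t0 : R) :
  a <= b ->
  (forall x, a <= x <= b -> exists d, 0 < d /\ forall y s, Dom y s ->
       Rabs (y - x) < d -> Rabs (s - t0) < d -> Q y s) ->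
  exists d, 0 < d /\ forall y s, Dom y s -> a <= y <= b -> t0 <= s < t0 + d -> Q y s.
Proof.
  intros Hab Hloc.
  set (Strip := fun z => exists d, 0 < d /\
         forall y s, Dom y s -> a <= y <= z -> t0 <= s < t0 + d -> Q y s).
  set (E := fun z => a <= z <= b /\ Strip z).
  assert (Ea : E a).
  { split; [lra|]. destruct (Hloc a ltac:(lra)) as [d [Hd Hnear]].
    exists d; split; [exact Hd|]. intros y s Hy Hya Hs. apply Hnear; [exact Hy| |].
    - replace (y - a) with 0 by lra. rewrite Rabs_R0; lra.
    - rewrite Rabs_right; lra. }
  destruct (completeness E) as [zs [Hub Hlub]].
  { exists b. intros z [Hz _]. lra. }
  { exists a. exact Ea. }
  assert (Hzs1 : a <= zs) by (apply Hub; exact Ea).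
  assert (Hzs2 : zs <= b) by (apply Hlub; intros z [Hz _]; lra).
  destruct (Hloc zs ltac:(lra)) as [d0 [Hd0 Hnear]].
  assert (Hclose : exists z', E z' /\ zs - d0 < z').
  { apply NNPP; intro Hn. assert (zs <= zs - d0); [|lra].
    apply Hlub. intros z Ez. apply Rnot_lt_le. intro. apply Hn. exists z; auto. }
  destruct Hclose as [z' [[Hz' [d1 [Hd1 Hstrip]]] Hz'2]].
  set (z'' := Rmin (zs + d0/2) b).
  assert (Hm1 := Rmin_l (zs + d0/2) b). assert (Hm2 := Rmin_r (zs + d0/2) b).
  assert (Ez'' : E z'').
  { split; [unfold z''; split; [apply Rmin_glb|]; lra|].
    exists (Rmin d0 d1). split; [apply Rmin_glb_lt; lra|].
    assert (Hn1 := Rmin_l d0 d1). assert (Hn2 := Rmin_r d0 d1).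
    intros y s Hy Hyz Hs. unfold z'' in Hyz. destruct (Rle_or_lt y z') as [Hyz'|Hyz'].
    - apply Hstrip; auto; lra.
    - apply Hnear; [exact Hy|unfold Rabs; destruct Rcase_abs; lra|rewrite Rabs_right; lra]. }
  assert (Hb : z'' = b).
  { assert (Hle := Hub _ Ez''). unfold z'' in *.
    destruct (Rle_dec (zs + d0/2) b).
    - rewrite Rmin_left in Hle by lra. lra.
    - rewrite Rmin_right by lra. reflexivity. }
  destruct Ez'' as [_ Hstrip'']. rewrite Hb in Hstrip''. exact Hstrip''.
Qed.

Lemma derivable_pt_lim_affine (f g : R -> R) (x l a b c : R) :
  (forall y, g y = a * f y + b + c * y) -> derivable_pt_lim f x l ->
  derivable_pt_lim g x (a * l + c).
Proof.
  intros E H. apply is_derive_Reals in H. apply is_derive_Reals.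
  apply (is_derive_ext (fun y => a * f y + b + c * y)); [intros; symmetry; apply E|].
  auto_derive; [now exists l|].
  replace (Derive (fun y => f y) x) with l by (symmetry; now apply is_derive_unique). ring.
Qed.

Lemma cont_on_dom_affine (rho : R -> R -> R) (lt rt : R -> R) (tau a b c d : R) :
  cont_on_dom rho lt rt tau ->
  cont_on_dom (fun x t => a * rho x t + b + c * x + d * t) lt rt tau.
Proof.
  intros H x t Hd eps Heps.
  assert (Ha := Rabs_pos a). assert (Hc := Rabs_pos c). assert (Hdd := Rabs_pos d).
  destruct (H x t Hd (eps / 2 / (Rabs a + 1))) as [del [Hdel Hnear]].
  { apply Rdiv_lt_0_compat; lra. }
  set (e1 := eps / 4 / (Rabs c + 1)). set (e2 := eps / 4 / (Rabs d + 1)).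
  assert (He1 : 0 < e1) by (unfold e1; apply Rdiv_lt_0_compat; lra).
  assert (He2 : 0 < e2) by (unfold e2; apply Rdiv_lt_0_compat; lra).
  exists (Rmin del (Rmin e1 e2)). split; [repeat apply Rmin_glb_lt; lra|].
  intros y s Hds Hy Hs.
  assert (Hm1 := Rmin_l del (Rmin e1 e2)). assert (Hm2 := Rmin_r del (Rmin e1 e2)).
  assert (Hm3 := Rmin_l e1 e2). assert (Hm4 := Rmin_r e1 e2).
  assert (Hrho := Hnear y s Hds ltac:(lra) ltac:(lra)).
  replace (a * rho y s + b + c * y + d * s - (a * rho x t + b + c * x + d * t))
    with (a * (rho y s - rho x t) + c * (y - x) + d * (s - t)) by ring.
  eapply Rle_lt_trans; [apply Rabs_triang|].
  eapply Rle_lt_trans; [apply Rplus_le_compat_r, Rabs_triang|]. rewrite !Rabs_mult.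
  assert (P1 := Rabs_pos (rho y s - rho x t)).
  assert (P2 := Rabs_pos (y - x)). assert (P3 := Rabs_pos (s - t)).
  assert (B1 : Rabs a * Rabs (rho y s - rho x t) <= eps / 2).
  { apply Rle_trans with ((Rabs a + 1) * Rabs (rho y s - rho x t)); [nra|].
    apply Rle_trans with ((Rabs a + 1) * (eps / 2 / (Rabs a + 1))).
    - apply Rmult_le_compat_l; lra.
    - right; field; lra. }
  assert (B2 : Rabs c * Rabs (y - x) < eps / 4).
  { apply Rle_lt_trans with ((Rabs c + 1) * Rabs (y - x)); [nra|].
    apply Rlt_le_trans with ((Rabs c + 1) * e1).
    - apply Rmult_lt_compat_l; lra.
    - right; unfold e1; field; lra. }
  assert (B3 : Rabs d * Rabs (s - t) < eps / 4).
  { apply Rle_lt_trans with ((Rabs d + 1) * Rabs (s - t)); [nra|].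
    apply Rlt_le_trans with ((Rabs d + 1) * e2).
    - apply Rmult_lt_compat_l; lra.
    - right; unfold e2; field; lra. }
  lra.
Qed.

Section MaximumPrinciple.

Variables (lt rt : R -> R) (tau : R).
Hypothesis lt_mono : forall s t, 0 <= s -> s <= t -> t <= tau -> lt s <= lt t.
Hypothesis rt_mono : forall s t, 0 <= s -> s <= t -> t <= tau -> rt t <= rt s.

Lemma slice_shrinks (s t y : R) :
  0 <= s <= t -> t <= tau -> lt t <= y <= rt t -> lt s <= y <= rt s.
Proof.
  intros Hs Ht Hy. split.
  - apply Rle_trans with (lt t); [apply lt_mono|]; lra.
  - apply Rle_trans with (rt t); [|apply rt_mono]; lra.
Qed.

Variables (v vt vx vxx : R -> R -> R) (eps : R).
Hypothesis eps_pos : 0 < eps.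
Hypothesis v_cont : cont_on_dom v lt rt tau.
Hypothesis v_pde : forall x t, in_open_dom lt rt tau x t ->
  derivable_pt_lim (fun s => v x s) t (vt x t) /\
  (forall y, lt t < y < rt t -> derivable_pt_lim (fun z => v z t) y (vx y t)) /\
  derivable_pt_lim (fun z => vx z t) x (vxx x t) /\ vt x t = vxx x t + eps.
Hypothesis v_bdry : forall t, 0 <= t < tau -> 0 < v (lt t) t /\ 0 < v (rt t) t.
Hypothesis v_init : forall x, lt 0 <= x <= rt 0 -> 0 < v x 0.

Definition positive_before (t : R) : Prop :=
  forall s y, 0 <= s < t -> lt s <= y <= rt s -> 0 < v y s.

Lemma nonneg_at_limit_time (ts : R) :
  0 <= ts <= tau -> positive_before ts ->
  forall y, lt ts <= y <= rt ts -> 0 <= v y ts.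
Proof.
  intros Hts Hbefore y Hy.
  destruct (Req_dec ts 0) as [->|Hts0]; [left; apply v_init, Hy|].
  apply Rnot_lt_le. intro Hneg.
  destruct (v_cont y ts ltac:(split; [lra|exact Hy]) (- v y ts) ltac:(lra))
    as [d [Hd Hnear]].
  set (s := Rmax (ts - d/2) (ts/2)).
  assert (Hs1 := Rmax_l (ts - d/2) (ts/2)). assert (Hs2 := Rmax_r (ts - d/2) (ts/2)).
  assert (Hs3 : s < ts) by (unfold s; apply Rmax_lub_lt; lra).
  fold s in Hs1, Hs2.
  assert (Hy' : lt s <= y <= rt s) by (apply (slice_shrinks s ts); lra).
  assert (Hpos := Hbefore s y ltac:(lra) Hy').
  assert (Hdist := Hnear y s ltac:(split; [lra|exact Hy'])).
  unfold Rminus in Hdist. rewrite Rplus_opp_r, Rabs_R0 in Hdist.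
  specialize (Hdist ltac:(lra) ltac:(rewrite Rabs_left by lra; lra)).
  revert Hdist. unfold Rabs; destruct Rcase_abs; lra.
Qed.

(* v cannot reach 0 for the first time at an instant ts < tau: the zero
   would be interior, where v_t <= 0 <= v_xx contradicts v_t = v_xx + eps. *)
Lemma no_first_zero (ts y0 : R) :
  0 <= ts < tau -> lt ts <= y0 <= rt ts -> v y0 ts = 0 -> positive_before ts ->
  (forall y, lt ts <= y <= rt ts -> 0 <= v y ts) -> False.
Proof.
  intros Hts Hy0 Hzero Hbefore Hnonneg.
  destruct (v_bdry ts Hts) as [Hl Hr].
  assert (Hts0 : 0 < ts).
  { destruct (Req_dec ts 0) as [E|E]; [|lra]. rewrite E in *.
    assert (Hp := v_init y0 Hy0). lra. }
  assert (Hint : lt ts < y0 < rt ts).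
  { split; apply Rnot_le_lt; intro; [replace y0 with (lt ts) in Hzero by lra
                                     |replace y0 with (rt ts) in Hzero by lra]; lra. }
  destruct (v_pde y0 ts ltac:(split; lra)) as [Ht [Hx [Hxx Heq]]].
  assert (Hvt : vt y0 ts <= 0).
  { apply (deriv_nonpos_at_left_min (fun s => v y0 s) ts (vt y0 ts) ts Hts0 Ht).
    intros s Hs. simpl. rewrite Hzero. left.
    apply Hbefore; [lra|apply (slice_shrinks s ts); lra]. }
  assert (Hvxx : 0 <= vxx y0 ts).
  { apply (second_deriv_nonneg_at_min (fun z => v z ts) (fun z => vx z ts)
             (lt ts) (rt ts) y0); auto.
    intros y Hy. simpl. rewrite Hzero. apply Hnonneg. lra. }
  lra.
Qed.

Lemma positivity_persists (ts : R) :
  0 <= ts < tau -> (forall y, lt ts <= y <= rt ts -> 0 < v y ts) ->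
  exists d, 0 < d /\
    forall s y, ts <= s < ts + d -> s <= tau -> lt s <= y <= rt s -> 0 < v y s.
Proof.
  intros Hts Hpos.
  destruct (Rle_or_lt (lt ts) (rt ts)) as [Hab|Hempty].
  - destruct (uniform_time_step (fun y s => 0 < v y s) (in_closed_dom lt rt tau)
                (lt ts) (rt ts) ts Hab) as [d [Hd Hstrip]].
    + intros x Hx.
      destruct (v_cont x ts ltac:(split; [lra|exact Hx]) (v x ts) (Hpos x Hx))
        as [d [Hd Hnear]].
      exists d; split; [exact Hd|]. intros y s Hdom Hy Hs.
      specialize (Hnear y s Hdom Hy Hs). revert Hnear. unfold Rabs; destruct Rcase_abs; lra.
    + exists d; split; [exact Hd|]. intros s y Hs Hstau Hy.
      apply Hstrip; [split; [lra|exact Hy]|apply (slice_shrinks ts s); lra|lra].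
  - exists 1; split; [lra|]. intros s y Hs Hstau Hy.
    assert (lt ts <= y <= rt ts) by (apply (slice_shrinks ts s); lra). lra.
Qed.

(* Let ts
   be the supremum of the times before which v is positive.  Then ts = tau:
   at ts < tau, v can neither vanish somewhere on the slice (no_first_zero)
   nor be positive on all of it (positivity would persist beyond ts). *)
Theorem max_principle (x t : R) : in_closed_dom lt rt tau x t -> 0 <= v x t.
Proof.
  intros [Ht Hx].
  set (S := fun t => 0 <= t <= tau /\ positive_before t).
  assert (S0 : S 0) by (split; [lra|intros s y Hs; lra]).
  destruct (completeness S) as [ts [Hub Hlub]].
  { exists tau. intros z [Hz _]. lra. }
  { exists 0; exact S0. }
  assert (Hts : 0 <= ts <= tau) by (split; [apply Hub, S0|apply Hlub; intros z [Hz _]; lra]).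
  assert (Hbefore : positive_before ts).
  { intros s y Hs Hy.
    destruct (classic (exists t', S t' /\ s < t')) as [[t' [[_ Ht'] Hst']]|Hn].
    - apply Ht'; [lra|exact Hy].
    - exfalso. assert (ts <= s); [|lra]. apply Hlub. intros z Sz.
      apply Rnot_lt_le. intro. apply Hn. exists z; auto. }
  assert (Hnonneg := nonneg_at_limit_time ts Hts Hbefore).
  assert (Hts_tau : ts = tau).
  { destruct (Req_dec ts tau) as [|Hne]; [assumption|]. exfalso.
    destruct (classic (exists y, lt ts <= y <= rt ts /\ v y ts <= 0)) as [[y0 [Hy0 Hv0]]|Hall].
    - apply (no_first_zero ts y0); auto; [lra|]. assert (Hp := Hnonneg y0 Hy0). lra.
    - destruct (positivity_persists ts ltac:(lra)) as [d [Hd Hlater]].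
      { intros y Hy. apply Rnot_le_lt. intro. apply Hall. exists y; auto. }
      set (t' := Rmin (ts + d/2) tau).
      assert (Hm1 := Rmin_l (ts + d/2) tau). assert (Hm2 := Rmin_r (ts + d/2) tau).
      assert (St' : S t').
      { split; [unfold t'; split; [apply Rmin_glb|]; lra|].
        intros s y Hs Hy. destruct (Rlt_or_le s ts) as [Hl|Hl].
        - apply Hbefore; [lra|exact Hy].
        - apply Hlater; [unfold t' in Hs; lra|unfold t' in Hs; lra|exact Hy]. }
      assert (Hle' := Hub _ St'). unfold t' in Hle'.
      destruct (Rle_or_lt (ts + d/2) tau).
      + rewrite Rmin_left in Hle' by lra. lra.
      + rewrite Rmin_right in Hle' by lra. lra. }
  destruct (Rlt_or_le t ts) as [Hlt|Hge].
  - left. apply Hbefore; [lra|exact Hx].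
  - replace t with ts by lra. apply Hnonneg. replace ts with t by lra. exact Hx.
Qed.

End MaximumPrinciple.

(* For
   eps > 0, w + eps (1 + t) solves w_t = w_xx + eps and is positive on the
   parabolic boundary, so the maximum principle applies; choosing eps small
   compared with a negative value of w gives a contradiction. *)
Lemma affine_barrier_nonneg (lt rt : R -> R) (tau : R) (rho : R -> R -> R) (a b c : R) :
  (forall s t, 0 <= s -> s <= t -> t <= tau -> lt s <= lt t) ->
  (forall s t, 0 <= s -> s <= t -> t <= tau -> rt t <= rt s) ->
  cont_on_dom rho lt rt tau -> heat_eq_interior rho lt rt tau ->
  (forall t, 0 <= t < tau -> 0 <= a * rho (lt t) t + b + c * lt t /\
                             0 <= a * rho (rt t) t + b + c * rt t) ->
  (forall x, lt 0 <= x <= rt 0 -> 0 <= a * rho x 0 + b + c * x) ->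
  forall x t, in_closed_dom lt rt tau x t -> 0 <= a * rho x t + b + c * x.
Proof.
  intros Hlt Hrt Hcont [rho_t [rho_x [rho_xx Hheat]]] Hbdry Hinit x t Hdom.
  apply Rnot_lt_le. intro Hneg.
  set (w := a * rho x t + b + c * x) in *.
  assert (Ht : 0 <= t) by (destruct Hdom as [[? ?] ?]; lra).
  set (eps := - w / (2 * (1 + t))).
  assert (Heps : 0 < eps) by (unfold eps; apply Rdiv_lt_0_compat; lra).
  assert (Hperturbed : 0 <= a * rho x t + (b + eps) + c * x + eps * t).
  { apply (max_principle lt rt tau Hlt Hrt
             (fun x t => a * rho x t + (b + eps) + c * x + eps * t)
             (fun x t => a * rho_t x t + eps) (fun x t => a * rho_x x t + c)
             (fun x t => a * rho_xx x t) eps Heps);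
      [exact (cont_on_dom_affine rho lt rt tau a (b + eps) c eps Hcont)| | |
       intros y Hy; assert (Hi := Hinit y Hy); nra|exact Hdom].
    - intros y s Hys. destruct (Hheat y s Hys) as [Hs [Hy [Hyy Heq]]].
      repeat split.
      + apply (derivable_pt_lim_affine (fun s => rho y s)) with (b := b + eps + c * y);
          [intros; ring|exact Hs].
      + intros z Hz. apply (derivable_pt_lim_affine (fun z => rho z s))
          with (b := b + eps + eps * s); [intros; ring|exact (Hy z Hz)].
      + replace (a * rho_xx y s) with (a * rho_xx y s + 0) by ring.
        apply (derivable_pt_lim_affine (fun z => rho_x z s)) with (b := c);
          [intros; ring|exact Hyy].
      + rewrite Heq. ring.
    - intros s Hs. destruct (Hbdry s Hs) as [B1 B2]. split; nra. }
  assert (E : a * rho x t + (b + eps) + c * x + eps * t = w / 2).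
  { unfold eps, w. field. lra. }
  lra.
Qed.

Section Confinement.

Variables (l0 r0 N lb tau : R) (lt rt : R -> R) (rho : R -> R -> R).
Hypothesis N_lb : N * lb = 1/4.
Hypothesis lb_pos : 0 < lb.
Hypothesis width : 8 * lb <= r0 - l0.
Hypothesis lt_mono : forall s t, 0 <= s -> s <= t -> t <= tau -> lt s <= lt t.
Hypothesis rt_mono : forall s t, 0 <= s -> s <= t -> t <= tau -> rt t <= rt s.
Hypothesis lt_init : lt 0 = l0.
Hypothesis rt_init : rt 0 = r0.
Hypothesis lt_confined : forall t, 0 <= t <= tau -> lt t <= l0 + 2 * lb.
Hypothesis rt_confined : forall t, 0 <= t <= tau -> r0 - 2 * lb <= rt t.
Hypothesis rho_cont : cont_on_dom rho lt rt tau.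
Hypothesis rho_heat : heat_eq_interior rho lt rt tau.
Hypothesis rho_left : forall t, 0 <= t <= tau -> rho (lt t) t = 1.
Hypothesis rho_right : forall t, 0 <= t <= tau -> rho (rt t) t = -1.
Hypothesis rho_envelope :
  forall x, l0 <= x <= r0 -> 1 - N * (x - l0) <= rho x 0 <= -1 + N * (r0 - x).

Lemma N_pos : 0 < N.
Proof. nra. Qed.

Lemma lt_ge_init (t : R) : 0 <= t <= tau -> l0 <= lt t.
Proof. intros Ht. rewrite <- lt_init. apply lt_mono; lra. Qed.

Lemma rt_le_init (t : R) : 0 <= t <= tau -> rt t <= r0.
Proof. intros Ht. rewrite <- rt_init. apply rt_mono; lra. Qed.

Lemma nonneg_near_left (t x : R) :
  0 <= t <= tau -> lt t <= x <= l0 + 2 * lb -> 0 <= rho x t.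
Proof.
  intros Ht Hx.
  assert (Hbarrier : 0 <= 1 * rho x t + (-1 - 2 * N * l0) + 2 * N * x).
  { apply (affine_barrier_nonneg lt rt tau rho); auto.
    - intros s Hs. rewrite rho_left, rho_right by lra.
      assert (H1 := lt_ge_init s ltac:(lra)). assert (H2 := rt_confined s ltac:(lra)).
      split; [nra|].
      assert (0 <= N * (rt s - l0 - 6 * lb))
        by (apply Rmult_le_pos; [left; apply N_pos|lra]).
      nra.
    - intros y Hy. rewrite lt_init, rt_init in Hy.
      destruct (rho_envelope y Hy). nra.
    - split; [exact Ht|]. split; [lra|]. assert (H := rt_confined t Ht). lra. }
  assert (0 <= N * (l0 + 2 * lb - x)) by (apply Rmult_le_pos; [left; apply N_pos|lra]). nra.
Qed.

Lemma nonpos_near_right (t x : R) :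
  0 <= t <= tau -> r0 - 2 * lb <= x <= rt t -> rho x t <= 0.
Proof.
  intros Ht Hx.
  assert (Hbarrier : 0 <= -1 * rho x t + (-1 + 2 * N * r0) + - (2 * N) * x).
  { apply (affine_barrier_nonneg lt rt tau rho); auto.
    - intros s Hs. rewrite rho_left, rho_right by lra.
      assert (H1 := lt_confined s ltac:(lra)). assert (H2 := rt_le_init s ltac:(lra)).
      split; [|nra].
      assert (0 <= N * (r0 - lt s - 6 * lb))
        by (apply Rmult_le_pos; [left; apply N_pos|lra]).
      nra.
    - intros y Hy. rewrite lt_init, rt_init in Hy.
      destruct (rho_envelope y Hy). nra.
    - split; [exact Ht|]. split; [|lra]. assert (H := lt_confined t Ht). lra. }
  assert (0 <= N * (x - (r0 - 2 * lb))) by (apply Rmult_le_pos; [left; apply N_pos|lra]). nra.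
Qed.

End Confinement.

Theorem lemma3p4
  (l0 r0 : R) (rho0 rho0' : R -> R) (Ninf : R)
  (lt rt : R -> R) (rho : R -> R -> R) (tau : R)
  (Hl0r0 : l0 < r0)
  (Hrange : forall x, l0 <= x <= r0 -> -1 <= rho0 x <= 1)
  (Hdiff : forall x, l0 <= x <= r0 -> D_in rho0 rho0' (fun y => l0 <= y <= r0) x)
  (Hbdd : exists M, forall x, l0 <= x <= r0 -> Rabs (rho0' x) <= M)
  (HNinf : is_lub (fun y => exists x, l0 <= x <= r0 /\ y = Rabs (rho0' x)) Ninf)
  (Hleft0 : rho0 l0 = 1) (Hright0 : rho0 r0 = -1)
  (Htau : 0 < tau)
  (Hlt_cont : cont_on_0T lt tau) (Hrt_cont : cont_on_0T rt tau)
  (Hlt_mono : forall s t, 0 <= s -> s <= t -> t <= tau -> lt s <= lt t)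
  (Hrt_mono : forall s t, 0 <= s -> s <= t -> t <= tau -> rt t <= rt s)
  (Hlt0 : lt 0 = l0) (Hrt0 : rt 0 = r0)
  (Hltrt : forall t, 0 <= t <= tau -> lt t < rt t)
  (Hcont : cont_on_dom rho lt rt tau)
  (Hheat : heat_eq_interior rho lt rt tau)
  (HbcL : forall t, 0 <= t <= tau -> rho (lt t) t = 1)
  (HbcR : forall t, 0 <= t <= tau -> rho (rt t) t = -1)
  (Hinit : forall x, l0 <= x <= r0 -> rho x 0 = rho0 x)
  (HconfL : forall t, 0 <= t < tau -> lt t <= l0 + 2 * / (4 * Ninf))
  (HconfR : forall t, 0 <= t < tau -> r0 - 2 * / (4 * Ninf) <= rt t) :
  (forall t x, 0 <= t <= tau -> lt t <= x <= l0 + 2 * / (4 * Ninf) -> 0 <= rho x t) /\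
  (forall t x, 0 <= t <= tau -> r0 - 2 * / (4 * Ninf) <= x <= rt t -> rho x t <= 0).
Proof.
  destruct HNinf as [HNub _].
  assert (Hslope : forall x, l0 <= x <= r0 -> Rabs (rho0' x) <= Ninf)
    by (intros x Hx; apply HNub; exists x; auto).
  destruct (profile_envelope rho0 rho0' l0 r0 Ninf Hdiff Hslope ltac:(lra) Hleft0 Hright0)
    as [Henv Hwidth].
  assert (HN : 0 < Ninf) by nra.
  set (lb := / (4 * Ninf)) in *.
  assert (HNlb : Ninf * lb = 1/4) by (unfold lb; field; lra).
  assert (Hlb : 0 < lb) by (unfold lb; apply Rinv_0_lt_compat; lra).
  assert (Hwidth' : 8 * lb <= r0 - l0).
  { assert (2 * lb <= Ninf * (r0 - l0) * lb) by (apply Rmult_le_compat_r; lra). nra. }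
  assert (HconfL' : forall t, 0 <= t <= tau -> lt t <= l0 + 2 * lb).
  { intros t Ht. destruct (Req_dec t tau) as [->|]; [|apply HconfL; lra].
    apply cont_on_0T_bound_endpoint; auto. }
  assert (HconfR' : forall t, 0 <= t <= tau -> r0 - 2 * lb <= rt t).
  { intros t Ht. destruct (Req_dec t tau) as [->|]; [|apply HconfR; lra].
    apply Ropp_le_cancel, (cont_on_0T_bound_endpoint (fun t => - rt t)); [exact Htau| |].
    - apply cont_on_0T_opp, Hrt_cont.
    - intros s Hs. apply Ropp_le_contravar, HconfR, Hs. }
  assert (Henv0 : forall x, l0 <= x <= r0 ->
                   1 - Ninf * (x - l0) <= rho x 0 <= -1 + Ninf * (r0 - x))
    by (intros x Hx; rewrite Hinit by exact Hx; apply Henv, Hx).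
  split; intros t x Ht Hx.
  - eapply (nonneg_near_left l0 r0 Ninf lb tau lt rt rho); eassumption.
  - eapply (nonpos_near_right l0 r0 Ninf lb tau lt rt rho); eassumption.
Qed.
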